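(* Let $c,d\ge 2$, let $\overline{Z}=\mathbb{C}^{N}$, $N=\binom{c+d}{2}$, be the Plücker coordinate space $\bigwedge^2(V\oplus W)$ with coordinates $T_{ij}$, $1\le i<j\le c+d$ (indices $1,\dots,c$ corresponding to $V$, $c+1,\dots,c+d$ to $W$), and let $\overline{X}\subseteq\overline{Z}$ be the affine cone over the Grassmannian $G(2,V\oplus W)$, defined by the Plücker relations $T_{ij}T_{kl}-T_{ik}T_{jl}+T_{il}T_{jk}$, $1\le i<j<k<l\le c+d$. Let the torus $\mathbb{T}^2=(\mathbb{C}^* )^2$ act diagonally on $\overline{Z}$, where $T_{ij}$ has weight $(1,1)$ if $i,j\le c$, weight $(1,0)$ if $i\le c<j$, and weight $(1,-1)$ if $c+1\le i,j$. Then the $\mathbb{T}^2$-actions on $\overline{Z}$ and on $\overline{X}$ have the same GIT-fan $\Lambda$, and the maximal cones of $\Lambda$ are $\lambda_1=\operatorname{cone}((1,1),(1,0))$ and $\lambda_2=\operatorname{cone}((1,0),(1,-1))$.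
   Context: For a torus $T$ acting on an affine variety $\overline{Y}$, for $y\in\overline{Y}$ let $\omega_y\subseteq\mathbb{X}_{\mathbb{Q}}(T)$ be the cone generated by the degrees of homogeneous $f\in\mathcal{O}(\overline{Y})$ with $f(y)\ne0$. For $w\in\mathbb{X}_{\mathbb{Q}}(T)$ the GIT-chamber is $\lambda(w)=\bigcap_{y\in\overline{Y},\,w\in\omega_y}\omega_y$, and the GIT-fan is the collection of all GIT-chambers $\lambda(w)$ (in the cone of weights $w$ for which the intersection is over a nonempty set). *)

From HB Require Import structures.
From mathcomp Require Import all_boot all_order all_algebra.
From mathcomp Require Import complex.
From mathcomp Require Import Rstruct.
From Stdlib Require Rdefinitions.
Set Implicit Arguments. Unset Strict Implicit. Unset Printing Implicit Defensive.
Import Order.TTheory GRing.Theory Num.Theory.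
Local Open Scope ring_scope.

Definition CC : fieldType := (Rdefinitions.R)[i].

(** Plücker index set: pairs (i,j) of 0-based indices i < j < n, n = c+d.
    Indices 0..c-1 correspond to V, c..c+d-1 to W. *)
Definition Idx (n : nat) := {p : 'I_n * 'I_n | (nat_of_ord p.1 < nat_of_ord p.2)%N}.

Definition pt (n : nat) := Idx n -> CC.

(** Coordinate T_ij of a point (0 if not i<j; only used with i<j). *)
Definition coordT n (x : pt n) (i j : 'I_n) : CC :=
  match insub (i, j) with Some p => x p | None => 0 end.

Definition wt (c d : nat) (p : Idx (c + d)) : int * int :=
  let i := (val p).1 in let j := (val p).2 in
  if (j < c)%N then (1%Z, 1%Z)
  else if (i < c)%N then (1%Z, 0%Z) else (1%Z, (-1)%Z).

Definition chi (w : int * int) (t : CC * CC) : CC := t.1 ^ w.1 * t.2 ^ w.2.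

Definition torus (t : CC * CC) : Prop := t.1 != 0 /\ t.2 != 0.

Definition act c d (t : CC * CC) (x : pt (c + d)) : pt (c + d) :=
  fun p => chi (wt p) t * x p.

Definition polyfun n (f : pt n -> CC) : Prop :=
  exists s : seq (CC * (Idx n -> nat)),
    forall x, f x = \sum_(m <- s) m.1 * \prod_(k : Idx n) x k ^+ m.2 k.

(** Homogeneous regular functions of degree w on the invariant subvariety
    Y (given as a predicate): restrictions of polynomial functions f
    with f(t.y) = chi_w(t) f(y) for all t in the torus and y in Y. *)
Definition homog c d (Y : pt (c + d) -> Prop) (w : int * int)
    (f : pt (c + d) -> CC) : Prop :=
  polyfun f /\
  forall t y, torus t -> Y y -> f (act t y) = chi w t * f y.

Definition intQ (w : int * int) : rat * rat := (w.1%:~R, w.2%:~R).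

Definition cone_gen (S : int * int -> Prop) (v : rat * rat) : Prop :=
  exists s : seq (rat * (int * int)),
    (forall m, m \in s -> 0 <= m.1 /\ S m.2) /\
    v.1 = \sum_(m <- s) m.1 * (intQ m.2).1 /\
    v.2 = \sum_(m <- s) m.1 * (intQ m.2).2.

Definition omega c d (Y : pt (c + d) -> Prop) (y : pt (c + d)) : rat * rat -> Prop :=
  cone_gen (fun w => exists f, homog Y w f /\ f y != 0).

Definition chamber c d (Y : pt (c + d) -> Prop) (w : rat * rat) : rat * rat -> Prop :=
  fun v => forall y, Y y -> omega Y y w -> omega Y y v.

Definition seteq (A B : rat * rat -> Prop) : Prop := forall v, A v <-> B v.
Definition subs (A B : rat * rat -> Prop) : Prop := forall v, A v -> B v.

(** Membership in the GIT-fan (cones considered up to extensional equality):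
    L = lambda(w) for some w in the weight cone (w in some omega_y, y in Y). *)
Definition in_GIT_fan c d (Y : pt (c + d) -> Prop) (L : rat * rat -> Prop) : Prop :=
  exists w, (exists y, Y y /\ omega Y y w) /\ seteq L (chamber Y w).

Definition max_cone c d (Y : pt (c + d) -> Prop) (L : rat * rat -> Prop) : Prop :=
  in_GIT_fan Y L /\ forall L', in_GIT_fan Y L' -> subs L L' -> subs L' L.

Definition cone2 (u1 u2 : rat * rat) (v : rat * rat) : Prop :=
  exists a b : rat, 0 <= a /\ 0 <= b /\
    v.1 = a * u1.1 + b * u2.1 /\ v.2 = a * u1.2 + b * u2.2.

Definition Zbar c d : pt (c + d) -> Prop := fun _ => True.

Definition Xbar c d : pt (c + d) -> Prop := fun x =>
  forall i j k l : 'I_(c + d), (i < j)%N -> (j < k)%N -> (k < l)%N ->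
    coordT x i j * coordT x k l - coordT x i k * coordT x j l
      + coordT x i l * coordT x j k = 0.

From mathcomp Require Import all_boot all_order all_algebra complex Rstruct ring lra zify.
Set Implicit Arguments.
Unset Strict Implicit.
Unset Printing Implicit Defensive.
Import Order.TTheory GRing.Theory Num.Theory.
Local Open Scope ring_scope.

(* The orbit cone of y is spanned by the weights of the nonzero Plücker
   coordinates of y.  The coordinate functions give one inclusion.  For the
   other, let f be homogeneous of weight w with f(y) <> 0 and let (a,b) pair
   nonnegatively with these weights: then s |-> f((s^a, s^b).y) is a polynomial
   in s which equals s^(aw1+bw2) f(y) for s <> 0, forcing aw1 + bw2 >= 0.
   Hence an orbit cone only depends on which of the weights (1,1), (1,0),
   (1,-1) occur.  Points of X realise every such type not containing both
   (1,1) and (1,-1), and the cone spanned by these two weights is the union of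
   the realised cones cone((1,1),(1,0)) and cone((1,0),(1,-1)). *)

Lemma poly_eq0_on_nonzero (F : numDomainType) (p : {poly F}) :
  (forall s, s != 0 -> p.[s] = 0) -> p = 0.
Proof.
move=> p0; apply: (@roots_geq_poly_eq0 _ _ [seq i.+1%:R | i <- iota 0 (size p)]).
- by apply/allP => _ /mapP [i _ ->]; rewrite /root p0 ?pnatr_eq0.
- by rewrite map_inj_uniq ?iota_uniq // => i j /eqP; rewrite eqr_nat => /eqP [].
- by rewrite size_map size_iota.
Qed.

Lemma XnM_horner_const_eq0 (F : numDomainType) (P : {poly F}) (N : nat) (k : F) :
  (0 < N)%N -> (forall s, s != 0 -> s ^+ N * P.[s] = k) -> k = 0.
Proof.
move=> N_gt0 hP.
have Q0 : 'X^N * P - k%:P = 0.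
  by apply: poly_eq0_on_nonzero => s s0; rewrite !hornerE hP ?subrr.
have := congr1 (horner^~ 0) Q0.
by rewrite !hornerE expr0n eqn0Ngt N_gt0 mul0r add0r => /eqP; rewrite oppr_eq0 => /eqP.
Qed.

Section OneParameterSubgroups.
Variables (c d : nat).
Local Notation n := (c + d).
Implicit Types (Y : pt n -> Prop) (y : pt n) (a b : int).

Lemma chi_one_param (w : int * int) a b (s : CC) : s != 0 ->
  chi w (s ^ a, s ^ b) = s ^ (a * w.1 + b * w.2).
Proof. by move=> s0; rewrite /chi /= !exprz_exp expfzDr. Qed.

Lemma one_param_orbit_poly (f : pt n -> CC) y a b : polyfun f ->
  (forall p, y p != 0 -> 0 <= a * (wt p).1 + b * (wt p).2) ->
  exists P : {poly CC}, forall s, s != 0 -> P.[s] = f (act (s ^ a, s ^ b) y).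
Proof.
move=> [ms hf] hy.
pose e (p : Idx n) := absz (a * (wt p).1 + b * (wt p).2).
exists (\sum_(m <- ms) m.1%:P * \prod_p ((y p)%:P * 'X^(e p)) ^+ m.2 p) => s s0.
rewrite hf horner_sum; apply: eq_bigr => m _; rewrite hornerCM horner_prod.
congr (_ * _); apply: eq_bigr => p _; rewrite horner_exp; congr (_ ^+ _).
rewrite hornerM hornerC hornerXn /act chi_one_param // mulrC.
have [->|yp0] := eqVneq (y p) 0; first by rewrite !(mul0r, mulr0).
by rewrite -(gez0_abs (hy p yp0)).
Qed.

Lemma homog_pairing_ge0 Y (w : int * int) f y a b :
  homog Y w f -> Y y -> f y != 0 ->
  (forall p, y p != 0 -> 0 <= a * (wt p).1 + b * (wt p).2) ->
  0 <= a * w.1 + b * w.2.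
Proof.
move=> [pf hom] Yy fy0 hy; have [P hP] := one_param_orbit_poly pf hy.
set K := a * w.1 + b * w.2; rewrite leNgt; apply/negP => K_lt0.
pose N := absz K; have K_eq : K = - N%:Z by rewrite ltz0_abs ?opprK.
apply/(negP fy0)/eqP/(@XnM_horner_const_eq0 _ P N); first by rewrite absz_gt0 ltr0_neq0.
move=> s s0; have tor : torus (s ^ a, s ^ b) by split; apply: expfz_neq0.
by rewrite hP // hom // chi_one_param // -/K K_eq -exprnN mulrA mulfV ?mul1r ?expf_neq0.
Qed.

End OneParameterSubgroups.

Lemma cone_gen_sub (S S' : int * int -> Prop) v :
  (forall w, S w -> S' w) -> cone_gen S v -> cone_gen S' v.
Proof.
by move=> SS' [ms [hms hv]]; exists ms; split=> // m /hms [m1_ge0 /SS'].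
Qed.

Lemma cone_gen_pairing_ge0 (S : int * int -> Prop) (a b : rat) v :
  (forall w, S w -> 0 <= a * (intQ w).1 + b * (intQ w).2) ->
  cone_gen S v -> 0 <= a * v.1 + b * v.2.
Proof.
move=> hS [ms [hms [-> ->]]]; rewrite !mulr_sumr -big_split big_seq /=.
apply: sumr_ge0 => m /hms [m1_ge0 /hS hm].
by rewrite mulrCA [b * _]mulrCA -mulrDr mulr_ge0.
Qed.

Lemma cone_gen2 (S : int * int -> Prop) u1 u2 (a b : rat) v :
  S u1 -> S u2 -> 0 <= a -> 0 <= b ->
  v.1 = a * (intQ u1).1 + b * (intQ u2).1 ->
  v.2 = a * (intQ u1).2 + b * (intQ u2).2 -> cone_gen S v.
Proof.
move=> h1 h2 a_ge0 b_ge0 e1 e2; exists [:: (a, u1); (b, u2)].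
split; first by move=> m; rewrite !inE => /orP [] /eqP ->.
by rewrite !big_cons !big_nil !addr0.
Qed.

Lemma cone_gen0 (S : int * int -> Prop) : cone_gen S (0, 0).
Proof. by exists [::]; rewrite !big_nil. Qed.

Definition wVV : int * int := (1, 1).
Definition wVW : int * int := (1, 0).
Definition wWW : int * int := (1, -1).

Definition type_wts (vv vw ww : bool) (w : int * int) : bool :=
  [|| vv && (w == wVV), vw && (w == wVW) | ww && (w == wWW)].

(* The cone spanned by those of wVV, wVW, wWW whose flag is set. *)
Definition type_cone (vv vw ww : bool) (v : rat * rat) : Prop :=
  match vv, vw, ww with
  | true, _, true => - v.1 <= v.2 <= v.1
  | true, true, false => 0 <= v.2 <= v.1
  | false, true, true => - v.1 <= v.2 <= 0
  | true, false, false => 0 <= v.1 /\ v.2 = v.1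
  | false, true, false => 0 <= v.1 /\ v.2 = 0
  | false, false, true => 0 <= v.1 /\ v.2 = - v.1
  | false, false, false => v.1 = 0 /\ v.2 = 0
  end.

Lemma type_cone_gen (vv vw ww : bool) (v : rat * rat) :
  type_cone vv vw ww v -> cone_gen (type_wts vv vw ww) v.
Proof.
case: v => v1 v2; case: vv vw ww => [] [] [] /= h;
  [ apply: (@cone_gen2 _ wVV wWW ((v1 + v2) / 2) ((v1 - v2) / 2))
  | apply: (@cone_gen2 _ wVV wVW v2 (v1 - v2))
  | apply: (@cone_gen2 _ wVV wWW ((v1 + v2) / 2) ((v1 - v2) / 2))
  | apply: (@cone_gen2 _ wVV wVV v1 0)
  | apply: (@cone_gen2 _ wVW wWW (v1 + v2) (- v2))
  | apply: (@cone_gen2 _ wVW wVW v1 0)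
  | apply: (@cone_gen2 _ wWW wWW v1 0)
  | by case: h => -> ->; apply: cone_gen0 ].
all: by rewrite /type_wts /intQ /= ?eqxx ?orbT ?(mulr1z, mulrN1z, mulr0z); lra.
Qed.

Lemma type_cone_dual (vv vw ww : bool) (v : rat * rat) :
  (forall a b : int, (vv -> 0 <= a + b) -> (vw -> 0 <= a) -> (ww -> 0 <= a - b) ->
    0 <= a%:~R * v.1 + b%:~R * v.2) ->
  type_cone vv vw ww v.
Proof.
move=> dual.
(* The inner normals of the edges of all eight type cones. *)
have k1 : 0 <= v.1.
  by move: (dual 1 0); rewrite ?(mulr1z, mulr0z, mul1r, mul0r, addr0); apply.
have k2 : 0 <= v.1 + v.2.
  by move: (dual 1 1); rewrite ?(mulr1z, mul1r); apply.
have k3 : 0 <= v.1 - v.2.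
  by move: (dual 1 (-1)); rewrite ?(mulr1z, mulrN1z, mul1r, mulN1r); apply.
have k4 : ww || (0 <= v.2).
  have [//|/negP nww] := boolP ww.
  by move: (dual 0 1); rewrite ?(mulr1z, mulr0z, mul1r, mul0r, add0r); apply.
have k5 : vv || (v.2 <= 0).
  have [//|/negP nvv] := boolP vv; rewrite -oppr_ge0.
  by move: (dual 0 (-1)); rewrite ?(mulrN1z, mulr0z, mulN1r, mul0r, add0r); apply.
have k6 : vw || ww || (v.1 <= v.2).
  have [//|/negP nvw] := boolP vw; have [//|/negP nww] := boolP ww.
  rewrite -subr_ge0 addrC.
  by move: (dual (-1) 1); rewrite ?(mulrN1z, mulr1z, mulN1r, mul1r); apply.
have k7 : vv || vw || (v.1 + v.2 <= 0).
  have [//|/negP nvv] := boolP vv; have [//|/negP nvw] := boolP vw.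
  rewrite -oppr_ge0 opprD.
  by move: (dual (-1) (-1)); rewrite ?(mulrN1z, mulN1r); apply.
by clear dual; case: vv vw ww k4 k5 k6 k7 => [] [] [] /= *; lra.
Qed.

Lemma type_cone_bound (vv vw ww : bool) (v : rat * rat) :
  type_cone vv vw ww v -> - v.1 <= v.2 <= v.1.
Proof.
by case: vv vw ww => [] [] [] /= *; lra.
Qed.

(* cone((1,1),(1,-1)) is the union of cone((1,1),(1,0)) and cone((1,0),(1,-1)). *)
Lemma type_cone_split (vv vw ww : bool) (w : rat * rat) : type_cone vv vw ww w ->
  exists vv' vw' ww', [/\ ~~ (vv' && ww'), type_cone vv' vw' ww' w &
    forall v, type_cone vv' vw' ww' v -> type_cone vv vw ww v].
Proof.
case: vv vw ww => [] [] [] /= wtc.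
1,3: have [w2_ge0 | w2_lt0] := lerP 0 w.2;
  [exists true, true, false | exists false, true, true]; by split=> //= [|v ?]; lra.
- by exists true, true, false.
- by exists true, false, false.
- by exists false, true, true.
- by exists false, true, false.
- by exists false, false, true.
- by exists false, false, false.
Qed.

(* lambda_cone true and lambda_cone false are the cones λ1 and λ2. *)
Definition lambda_cone (b : bool) : rat * rat -> Prop := type_cone b true (~~ b).

Definition lambda_wt (b : bool) : rat * rat := (2, if b then 1 else -1).

Lemma lambda_cone_wt b : lambda_cone b (lambda_wt b).
Proof. by case: b => /=; lra. Qed.

Lemma lambda_cone_sub_type_cone (vv vw ww b : bool) (v : rat * rat) :
  type_cone vv vw ww (lambda_wt b) -> lambda_cone b v -> type_cone vv vw ww v.
Proof.
by case: b vv vw ww => [] [] [] [] /= *; lra.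
Qed.

Section OrbitCones.
Variables (c d : nat).
Local Notation n := (c + d).
Implicit Types (Y : pt n -> Prop) (y : pt n) (p : Idx n).

Definition has_wt y (w : int * int) : bool := [exists p, (y p != 0) && (wt p == w)].

Definition orbit_cone y : rat * rat -> Prop :=
  type_cone (has_wt y wVV) (has_wt y wVW) (has_wt y wWW).

Lemma wt_cases p : [\/ wt p = wVV, wt p = wVW | wt p = wWW].
Proof. by rewrite /wt; case: ifP => _; [apply: Or31 | case: ifP => _; [apply: Or32 | apply: Or33]]. Qed.

Lemma has_wt_pairing_ge0 y (a b : int) :
  (has_wt y wVV -> 0 <= a + b) -> (has_wt y wVW -> 0 <= a) -> (has_wt y wWW -> 0 <= a - b) ->
  forall p, y p != 0 -> 0 <= a * (wt p).1 + b * (wt p).2.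
Proof.
move=> hVV hVW hWW p yp0.
have has_wtp : has_wt y (wt p) by apply/existsP; exists p; rewrite yp0 eqxx.
case: (wt_cases p) has_wtp => -> /=.
- by move/hVV; rewrite !mulr1.
- by move/hVW; rewrite mulr1 mulr0 addr0.
- by move/hWW; rewrite mulr1 mulrN1.
Qed.

Lemma has_wt_homog Y y w : has_wt y w -> exists f, homog Y w f /\ f y != 0.
Proof.
case/existsP=> p /andP [yp0 /eqP <-]; exists (fun x => x p); split=> //; split=> //.
exists [:: (1, fun k => nat_of_bool (k == p))] => x.
rewrite big_seq1 mul1r (bigD1 p) //= eqxx expr1 big1 ?mulr1 // => k /negbTE ->.
exact: expr0.
Qed.

Lemma omegaE Y y v : Y y -> omega Y y v <-> orbit_cone y v.
Proof.
move=> Yy; split=> [om | /type_cone_gen].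
  apply: type_cone_dual => a b hVV hVW hWW.
  apply: cone_gen_pairing_ge0 om => w [f [hf fy0]].
  rewrite /intQ /= -!intrM -intrD ler0z.
  exact: homog_pairing_ge0 hf Yy fy0 (has_wt_pairing_ge0 hVV hVW hWW).
apply: cone_gen_sub => w /or3P [] /andP [hy /eqP ->]; exact: has_wt_homog.
Qed.

Lemma chamberE Y w v : chamber Y w v <-> forall y, Y y -> orbit_cone y w -> orbit_cone y v.
Proof.
by split=> h y Yy /(omegaE _ Yy) /(h y Yy) /(omegaE _ Yy).
Qed.

Lemma Xbar_star (x : pt n) (h : nat) :
  (forall p, x p != 0 -> ((val p).1 == h :> nat) || ((val p).2 == h :> nat)) ->
  Xbar x.
Proof.
move=> star.
have coordT_star (i j : 'I_n) : coordT x i j != 0 -> (i == h :> nat) || (j == h :> nat).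
  by rewrite /coordT; case: insubP => [p _ vp /star | _]; rewrite ?vp ?eqxx.
(* The two factors of each product in a Plücker relation have disjoint indices. *)
have disjoint0 (i j k l : 'I_n) : [&& i != k :> nat, i != l :> nat, j != k :> nat & j != l :> nat] ->
    coordT x i j * coordT x k l = 0.
  move=> dis; apply/eqP; rewrite mulf_eq0.
  have [|/coordT_star hij] := eqVneq (coordT x i j) 0; first by [].
  have [|/coordT_star hkl] := eqVneq (coordT x k l) 0; first by rewrite orbT.
  exfalso; lia.
move=> i j k l ij jk kl.
rewrite !disjoint0 ?subrr ?addr0 //; move: ij jk kl.
all: move: (nat_of_ord i) (nat_of_ord j) (nat_of_ord k) (nat_of_ord l); lia.
Qed.

(* Supported on T_12 if vv, T_1(c+1) if vw and T_(c+1)(c+2) if ww (indices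
   are 0-based below).  Unless vv && ww these coordinates share an index. *)
Definition type_pt (vv vw ww : bool) : pt n := fun p =>
  let i := nat_of_ord (val p).1 in let j := nat_of_ord (val p).2 in
  if [|| vv && (i == 0) && (j == 1), vw && (i == 0) && (j == c)
       | ww && (i == c) && (j == c.+1)]%N then 1 else 0.

Lemma type_pt_Xbar (vv vw ww : bool) : ~~ (vv && ww) -> Xbar (type_pt vv vw ww).
Proof.
move=> vv_ww; apply: (@Xbar_star _ (if ww then c else 0%N)) => p.
rewrite /type_pt; case: ifP => [+ _ | _]; last by rewrite eqxx.
move: vv_ww; move: (nat_of_ord (val p).1) (nat_of_ord (val p).2).
by case: vv vw ww => [] [] [] //= i j; lia.
Qed.

Hypotheses (c_ge2 : (2 <= c)%N) (d_ge2 : (2 <= d)%N).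

Lemma has_wt_type_pt (vv vw ww : bool) w :
  has_wt (type_pt vv vw ww) w = type_wts vv vw ww w.
Proof.
apply/existsP/idP => [[p /andP []] | ].
  rewrite /type_pt /wt; case: ifP => [+ _ | _]; last by rewrite eqxx.
  move: (nat_of_ord (val p).1) (nat_of_ord (val p).2) => i j.
  case/or3P=> /andP [/andP [h /eqP ->] /eqP ->] /eqP <-; rewrite /type_wts h.
  - by rewrite c_ge2 eqxx.
  - by rewrite ltnn (ltnW c_ge2) eqxx orbT.
  - by rewrite ltnn ltnNge leqnSn eqxx !orbT.
have o0 : (0 < c + d)%N by lia.
have o1 : (1 < c + d)%N by lia.
have oc : (c < c + d)%N by lia.
have oc1 : (c.+1 < c + d)%N by lia.
case/or3P=> /andP [h /eqP ->].
- exists (exist _ (Ordinal o0, Ordinal o1) isT).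
  by rewrite /type_pt /wt /= h c_ge2 oner_eq0.
- exists (exist _ (Ordinal o0, Ordinal oc) (ltnW c_ge2)).
  by rewrite /type_pt /wt /= h ltnn (ltnW c_ge2) !eqxx /= orbT oner_eq0.
- exists (exist _ (Ordinal oc, Ordinal oc1) (ltnSn c)).
  by rewrite /type_pt /wt /= h ltnn ltnNge leqnSn !eqxx /= !orbT oner_eq0.
Qed.

Lemma orbit_cone_type_pt (vv vw ww : bool) :
  orbit_cone (type_pt vv vw ww) = type_cone vv vw ww.
Proof.
rewrite /orbit_cone !has_wt_type_pt /type_wts.
by congr type_cone; case: vv vw ww => [] [] [].
Qed.

Local Notation Z := (@Zbar c d).
Local Notation X := (@Xbar c d).

Lemma chamber_Zbar_Xbar w : seteq (chamber Z w) (chamber X w).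
Proof.
move=> v; split=> /chamberE h; apply/chamberE => y Yy; first exact: h.
case/type_cone_split=> [vv [vw [ww [vv_ww wy sub]]]].
by apply/sub; rewrite -orbit_cone_type_pt; apply: h (type_pt_Xbar vw vv_ww) _; rewrite orbit_cone_type_pt.
Qed.

Lemma weight_cone_Zbar_Xbar w :
  (exists y, Z y /\ omega Z y w) <-> (exists y, X y /\ omega X y w).
Proof.
split=> [[y [_ /(omegaE _ I)]] | [y [Xy /(omegaE _ Xy)] wy]]; last by exists y; split=> //; apply/(omegaE _ I).
case/type_cone_split=> [vv [vw [ww [vv_ww wy _]]]].
exists (type_pt vv vw ww); split; first exact: type_pt_Xbar.
by apply/(omegaE _ (type_pt_Xbar vw vv_ww)); rewrite orbit_cone_type_pt.
Qed.

Lemma chamber_sub_lambda b w : lambda_cone b w -> subs (chamber X w) (lambda_cone b).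
Proof.
have Xb : X (type_pt b true (~~ b)) by apply: type_pt_Xbar; rewrite andbN.
by move=> wb v /chamberE /(_ _ Xb); rewrite orbit_cone_type_pt; apply.
Qed.

Lemma chamber_lambda b : seteq (chamber X (lambda_wt b)) (lambda_cone b).
Proof.
move=> v; split; first exact/chamber_sub_lambda/lambda_cone_wt.
move=> vb; apply/chamberE => y _ /lambda_cone_sub_type_cone; exact.
Qed.

Lemma in_GIT_fan_lambda b : in_GIT_fan X (lambda_cone b).
Proof.
have Xb : X (type_pt b true (~~ b)) by apply: type_pt_Xbar; rewrite andbN.
exists (lambda_wt b); split; last by move=> v; rewrite (chamber_lambda b v).
exists (type_pt b true (~~ b)); split=> //; apply/(omegaE _ Xb).
by rewrite orbit_cone_type_pt; apply: lambda_cone_wt.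
Qed.

Lemma in_GIT_fan_sub_lambda L : in_GIT_fan X L -> exists b, subs L (lambda_cone b).
Proof.
move=> [w [[y [Xy /(omegaE _ Xy) /type_cone_bound /andP [w_ge w_le]]] eL]].
exists (0 <= w.2) => v /eL; apply: chamber_sub_lambda.
by case: lerP => /= *; lra.
Qed.

End OrbitCones.

Section GITFans.
Variables (c d : nat).
Implicit Types (Y : pt (c + d) -> Prop) (L : rat * rat -> Prop).

Lemma in_GIT_fan_ext Y Y' :
  (forall w, (exists y, Y y /\ omega Y y w) <-> (exists y, Y' y /\ omega Y' y w)) ->
  (forall w, seteq (chamber Y w) (chamber Y' w)) ->
  forall L, in_GIT_fan Y L <-> in_GIT_fan Y' L.
Proof.
move=> eW eC L; split=> [[w [/eW hw eL]] | [w [/eW hw eL]]]; exists w; split=> // v.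
  by rewrite eL eC.
by rewrite eL eC.
Qed.

Lemma in_GIT_fan_seteq Y L L' : seteq L L' -> in_GIT_fan Y L -> in_GIT_fan Y L'.
Proof. by move=> eL [w [hw eC]]; exists w; split=> // v; rewrite -eL eC. Qed.

Lemma max_cone_cover Y (I : Type) (E : I -> rat * rat -> Prop) :
  (forall i, in_GIT_fan Y (E i)) ->
  (forall L, in_GIT_fan Y L -> exists i, subs L (E i)) ->
  (forall i j, subs (E i) (E j) -> i = j) ->
  forall L, max_cone Y L <-> exists i, seteq L (E i).
Proof.
move=> fanE cover injE L; split=> [[fanL maxL] | [i eL]].
  have [i Li] := cover L fanL; exists i => v; split; first exact: Li.
  exact: maxL _ (fanE i) Li v.
split=> [|L' fanL' LL']; first by apply: in_GIT_fan_seteq (fanE i) => v; rewrite eL.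
have [j L'j] := cover L' fanL'.
have ij : i = j by apply: injE => v /eL /LL' /L'j.
by move=> v /L'j; rewrite -ij eL.
Qed.

End GITFans.

Lemma lambda_cone_inj b b' : subs (lambda_cone b) (lambda_cone b') -> b = b'.
Proof. by case: b b' => [] [] // /(_ _ (lambda_cone_wt _)). Qed.

Lemma cone2_lambda1 : seteq (cone2 (1, 1) (1, 0)) (lambda_cone true).
Proof.
case=> v1 v2; split=> [[a [b /= ?]] | /= ?]; first lra.
by exists v2, (v1 - v2) => /=; lra.
Qed.

Lemma cone2_lambda2 : seteq (cone2 (1, 0) (1, -1)) (lambda_cone false).
Proof.
case=> v1 v2; split=> [[a [b /= ?]] | /= ?]; first lra.
by exists (v1 + v2), (- v2) => /=; lra.
Qed.

Theorem proposition2p1 (c d : nat) (hc : (2 <= c)%N) (hd : (2 <= d)%N) :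
  (forall L, in_GIT_fan (@Zbar c d) L <-> in_GIT_fan (@Xbar c d) L) /\
  (forall L, max_cone (@Xbar c d) L <->
     (seteq L (cone2 (1, 1) (1, 0)) \/ seteq L (cone2 (1, 0) (1, -1)))).
Proof.
split; first exact: in_GIT_fan_ext (weight_cone_Zbar_Xbar hc hd) (chamber_Zbar_Xbar hc hd).
move=> L; rewrite (max_cone_cover (in_GIT_fan_lambda hc hd) (in_GIT_fan_sub_lambda hc hd) lambda_cone_inj).
split=> [[[] eL] | [eL | eL]]; [left | right | exists true | exists false] => v;
  by rewrite eL ?cone2_lambda1 ?cone2_lambda2.
Qed.
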